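(* If $X$ is weakly Alster and $Y$ is weakly Lindel\''of, then $X\times Y$ is weakly Lindel\''of.
   Context: All spaces are infinite ${\sf T}_1$ topological spaces. $\mathcal{G}_K$ is the family of all collections $\mathcal{U}$ of ${\sf G}_\delta$ subsets of $X$ with $X\notin\mathcal{U}$ such that each compact subset of $X$ is contained in some member of $\mathcal{U}$. $X$ is weakly Alster if every member of $\mathcal{G}_K$ has a countable subcollection whose union is dense in $X$. A space is weakly Lindel\''of if every open cover has a countable subfamily whose union is dense. *)

From Stdlib Require Import List.
Import ListNotations.

Definition set (T : Type) := T -> Prop.

Definition is_topology {T : Type} (open : set T -> Prop) : Prop :=
  open (fun _ => True) /\
  (forall F : set T -> Prop, (forall U, F U -> open U) ->
     open (fun x => exists U, F U /\ U x)) /\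
  (forall U V, open U -> open V -> open (fun x => U x /\ V x)).

Definition T1_space {T : Type} (open : set T -> Prop) : Prop :=
  forall x y : T, x <> y -> exists U, open U /\ U x /\ ~ U y.

Definition infinite_type (T : Type) : Prop :=
  ~ exists l : list T, forall x : T, In x l.

Definition dense {T : Type} (open : set T -> Prop) (D : set T) : Prop :=
  forall U, open U -> (exists x, U x) -> exists x, U x /\ D x.

Definition G_delta {T : Type} (open : set T -> Prop) (A : set T) : Prop :=
  exists f : nat -> set T, (forall n, open (f n)) /\
    (forall x, A x <-> forall n, f n x).

Definition compact_subset {T : Type} (open : set T -> Prop) (K : set T) : Prop :=
  forall C : set T -> Prop, (forall U, C U -> open U) ->
    (forall x, K x -> exists U, C U /\ U x) ->
    exists l : list (set T), (forall U, In U l -> C U) /\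
      (forall x, K x -> exists U, In U l /\ U x).

Definition in_G_K {T : Type} (open : set T -> Prop) (UU : set T -> Prop) : Prop :=
  (forall U, UU U -> G_delta open U) /\
  (forall U, UU U -> ~ (forall x, U x)) /\
  (forall K, compact_subset open K ->
     exists U, UU U /\ forall x, K x -> U x).

(* countable subcollection with dense union; a countable nonempty subfamily is
   the range of a sequence *)
Definition has_countable_dense_subfamily {T : Type} (open : set T -> Prop)
  (UU : set T -> Prop) : Prop :=
  exists f : nat -> set T, (forall n, UU (f n)) /\
    dense open (fun x => exists n, f n x).

Definition weakly_Alster {T : Type} (open : set T -> Prop) : Prop :=
  forall UU, in_G_K open UU -> has_countable_dense_subfamily open UU.

Definition weakly_Lindelof {T : Type} (open : set T -> Prop) : Prop :=
  forall UU : set T -> Prop, (forall U, UU U -> open U) ->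
    (forall x, exists U, UU U /\ U x) ->
    has_countable_dense_subfamily open UU.

Definition prod_open {X Y : Type} (oX : set X -> Prop) (oY : set Y -> Prop)
  (W : set (X * Y)) : Prop :=
  forall p, W p -> exists U V, oX U /\ oY V /\ U (fst p) /\ V (snd p) /\
    (forall x y, U x -> V y -> W (x, y)).

From Stdlib Require Import List Cantor Classical ClassicalEpsilon.
Import ListNotations.

(* Let UU be a cover of X x Y by open sets.
   - Tube lemma: for a compact K of X and a point y of Y there are opens
     U ⊇ K and V ∋ y such that U x V is covered by finitely many members of UU.
     Choose such a "tube" T K y for all K and y.
   - For fixed compact K the fibres V of the tubes T K y cover Y, so weak
     Lindelofness of Y gives points ys K n whose fibres have dense union.
   - The kernel G K = ⋂_n (base of T K (ys K n)) is a G_delta set containing K.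
     Either some kernel is all of X, or the kernels form a member of the family
     G_K; in both cases (weak Alster property) countably many kernels G (Ks m)
     have dense union in X.
   - The countably many finite families of members of UU attached to the tubes
     T (Ks m) (ys (Ks m) j) then have dense union in X x Y: a basic open A x B
     meets a kernel in some x, and B meets a fibre in some y, so (x, y) lies
     in A x B and in one of the attached members of UU. *)

Lemma choice_on (A B : Type) (P : A -> Prop) (R : A -> B -> Prop) :
  inhabited B -> (forall a, P a -> exists b, R a b) ->
  exists f : A -> B, forall a, P a -> R a (f a).
Proof.
  intros [b0] HR.
  apply (ClassicalEpsilon.choice (fun (a : A) (b : B) => P a -> R a b)). intros a.
  destruct (classic (P a)) as [Pa | nPa].
  - destruct (HR a Pa) as [b Rb]. exists b. intros _. exact Rb.
  - exists b0. intros Pa. contradiction.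
Qed.

Lemma infinite_inhabited (T : Type) : infinite_type T -> inhabited T.
Proof.
  intros infT. apply NNPP. intros empty.
  apply infT. exists []. intros x. apply empty. exact (inhabits x).
Qed.

(* A countable union of finite lists can be enumerated by a single sequence;
   the default [a0] fills the positions beyond the end of a list. *)
Lemma enumerate_lists (A : Type) (P : A -> Prop) (a0 : A) (L : nat -> list A) :
  P a0 -> (forall m a, In a (L m) -> P a) ->
  exists f : nat -> A, (forall n, P (f n)) /\
    (forall m a, In a (L m) -> exists n, f n = a).
Proof.
  intros Pa0 PL.
  exists (fun n => let (m, k) := of_nat n in nth k (L m) a0). split.
  - intros n. destruct (of_nat n) as [m k].
    destruct (Compare_dec.lt_dec k (length (L m))) as [Hk | Hk].
    + apply (PL m). apply nth_In. exact Hk.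
    + rewrite nth_overflow; [exact Pa0 | apply PeanoNat.Nat.nlt_ge; exact Hk].
  - intros m a Ha. destruct (In_nth _ _ a0 Ha) as [k [_ Hk]].
    exists (to_nat (m, k)). rewrite cancel_of_to. exact Hk.
Qed.

Lemma weakly_Lindelof_indexed (Y Idx : Type) (oY : set Y -> Prop)
  (V : Idx -> set Y) :
  weakly_Lindelof oY -> (forall i, oY (V i)) -> (forall y, exists i, V i y) ->
  exists s : nat -> Idx, dense oY (fun y => exists n, V (s n) y).
Proof.
  intros HL Vopen Vcover.
  destruct (HL (fun W => exists i, W = V i)) as [g [Hg Hd]].
  - intros W [i ->]. apply Vopen.
  - intros y. destruct (Vcover y) as [i Vy]. exists (V i). eauto.
  - destruct (Hg 0) as [i0 _].
    destruct (choice_on nat Idx (fun _ => True) (fun n i => g n = V i))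
      as [s Hs]; [exact (inhabits i0) | intros n _; apply Hg |].
    exists s. intros O HO Onon.
    destruct (Hd O HO Onon) as [y [Oy [n Hy]]].
    exists y. split; [exact Oy |]. exists n. rewrite <- (Hs n I). exact Hy.
Qed.

Record tube (X Y : Type) := Tube {
  base : set X;
  fiber : set Y;
  members : list (set (X * Y)) }.
Arguments base {X Y}.
Arguments fiber {X Y}.
Arguments members {X Y}.

Section Tubes.
Variables (X Y : Type) (oX : set X -> Prop) (oY : set Y -> Prop).
Variable UU : set (X * Y) -> Prop.

Definition is_tube (K : set X) (y : Y) (t : tube X Y) : Prop :=
  oX (base t) /\ oY (fiber t) /\ fiber t y /\ (forall x, K x -> base t x) /\
  (forall W, In W (members t) -> UU W) /\
  (forall a b, base t a -> fiber t b -> exists W, In W (members t) /\ W (a, b)).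

Hypotheses (tX : is_topology oX) (tY : is_topology oY).
Hypothesis UU_open : forall W, UU W -> prod_open oX oY W.
Hypothesis UU_cover : forall p, exists W, UU W /\ W p.

(* Finitely many sets U, each with a rectangle U x V_U (V_U an open
   neighbourhood of y) inside a member of UU: intersecting the V_U gives one
   neighbourhood V of y such that every U x V is covered by a finite list. *)
Lemma common_fiber (y : Y) (lc : list (set X)) :
  (forall U, In U lc -> exists V W, oY V /\ V y /\ UU W /\
       forall a b, U a -> V b -> W (a, b)) ->
  exists V l, oY V /\ V y /\ (forall W, In W l -> UU W) /\
    (forall U, In U lc -> forall a b, U a -> V b -> exists W, In W l /\ W (a, b)).
Proof.
  destruct tY as [openT [_ openI]].
  induction lc as [|U0 lc IH]; intros Hlc.
  - exists (fun _ => True), []. repeat split; auto; intros ? [].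
  - destruct IH as [V [l [HV [Vy [Hl Hc]]]]].
    { intros U HU. apply Hlc. right. exact HU. }
    destruct (Hlc U0 (or_introl eq_refl)) as [V0 [W0 [HV0 [V0y [HW0 Hr]]]]].
    exists (fun b => V b /\ V0 b), (W0 :: l). repeat split; auto.
    + intros W [<- | HW]; auto.
    + intros U [<- | HU] a b Ha [Hb Hb0].
      * exists W0. split; [left; reflexivity | auto].
      * destruct (Hc U HU a b Ha Hb) as [W [HWl HW]].
        exists W. split; [right |]; auto.
Qed.

Lemma tube_exists (K : set X) (y : Y) :
  compact_subset oX K -> exists t, is_tube K y t.
Proof.
  intros HK.
  set (C := fun U : set X => oX U /\ exists V W, oY V /\ V y /\ UU W /\
       forall a b, U a -> V b -> W (a, b)).
  destruct (HK C) as [lc [Hlc Hcov]].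
  - intros U [HU _]. exact HU.
  - intros x Kx. destruct (UU_cover (x, y)) as [W [HW Wp]].
    destruct (UU_open W HW (x, y) Wp) as [U [V [HU [HV [Ux [Vy Hr]]]]]].
    exists U. split; [| exact Ux]. split; [exact HU |]. exists V, W. auto.
  - destruct (common_fiber y lc) as [V [l [HV [Vy [Hl Hc]]]]].
    { intros U HU. exact (proj2 (Hlc U HU)). }
    destruct tX as [_ [openU _]].
    exists (Tube X Y (fun x => exists U, In U lc /\ U x) V l).
    refine (conj _ (conj HV (conj Vy (conj _ (conj Hl _))))); simpl.
    + apply (openU (fun U => In U lc)). intros U HU. apply (Hlc U HU).
    + intros x Kx. destruct (Hcov x Kx) as [U [HU Ux]]. exists U. auto.
    + intros a b [U [HU Ua]] Vb. exact (Hc U HU a b Ua Vb).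
Qed.

Lemma tube_choice :
  exists T : set X -> Y -> tube X Y,
    forall K y, compact_subset oX K -> is_tube K y (T K y).
Proof.
  destruct (choice_on (set X * Y) (tube X Y)
              (fun Ky => compact_subset oX (fst Ky))
              (fun Ky t => is_tube (fst Ky) (snd Ky) t)) as [f Hf].
  - exact (inhabits (Tube X Y (fun _ => True) (fun _ => True) [])).
  - intros [K y] HK. exact (tube_exists K y HK).
  - exists (fun K y => f (K, y)). intros K y HK. exact (Hf (K, y) HK).
Qed.

Variable T : set X -> Y -> tube X Y.
Hypothesis T_tube : forall K y, compact_subset oX K -> is_tube K y (T K y).

Lemma fiber_selection :
  weakly_Lindelof oY -> inhabited Y ->
  exists ys : set X -> nat -> Y, forall K, compact_subset oX K ->
    dense oY (fun y => exists n, fiber (T K (ys K n)) y).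
Proof.
  intros HL [y0].
  apply (choice_on (set X) (nat -> Y) (compact_subset oX)
           (fun K s => dense oY (fun y => exists n, fiber (T K (s n)) y)));
    [exact (inhabits (fun _ => y0)) |].
  intros K HK. apply (weakly_Lindelof_indexed Y Y oY (fun y => fiber (T K y)) HL).
  - intros y. apply (T_tube K y HK).
  - intros y. exists y. apply (T_tube K y HK).
Qed.

Variable ys : set X -> nat -> Y.
Hypothesis ys_dense : forall K, compact_subset oX K ->
  dense oY (fun y => exists n, fiber (T K (ys K n)) y).

Definition kernel (K : set X) : set X := fun x => forall n, base (T K (ys K n)) x.

Lemma kernel_G_delta (K : set X) : compact_subset oX K -> G_delta oX (kernel K).
Proof.
  intros HK. exists (fun n => base (T K (ys K n))). split.
  - intros n. apply (T_tube K _ HK).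
  - intros x. unfold kernel. tauto.
Qed.

Lemma kernel_contains (K : set X) : compact_subset oX K ->
  forall x, K x -> kernel K x.
Proof. intros HK x Kx n. apply (T_tube K _ HK). exact Kx. Qed.

Lemma kernel_sequence :
  weakly_Alster oX ->
  exists Ks : nat -> set X, (forall m, compact_subset oX (Ks m)) /\
    dense oX (fun x => exists m, kernel (Ks m) x).
Proof.
  intros HA.
  destruct (classic (exists K, compact_subset oX K /\ forall x, kernel K x))
    as [[K [HK Hall]] | Hproper].
  - exists (fun _ => K). split; [intros; exact HK |].
    intros O _ [x Ox]. exists x. split; [exact Ox |]. exists 0. apply Hall.
  - destruct (HA (fun S => exists K, compact_subset oX K /\ S = kernel K))
      as [h [Hh Hd]].
    + split; [| split].
      * intros S [K [HK ->]]. exact (kernel_G_delta K HK).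
      * intros S [K [HK ->]] Hall. apply Hproper. eauto.
      * intros K HK. exists (kernel K). split; [eauto |].
        exact (kernel_contains K HK).
    + destruct (choice_on nat (set X) (fun _ => True)
        (fun m K => compact_subset oX K /\ h m = kernel K)) as [Ks HKs];
        [exact (inhabits (fun _ => True)) | intros m _; apply Hh |].
      exists Ks. split; [intros m; apply (HKs m I) |].
      intros O HO Onon. destruct (Hd O HO Onon) as [x [Ox [m Hx]]].
      exists x. split; [exact Ox |]. exists m.
      rewrite <- (proj2 (HKs m I)). exact Hx.
Qed.

Lemma dense_subfamily_from_kernels (Ks : nat -> set X) (W0 : set (X * Y)) :
  UU W0 -> (forall m, compact_subset oX (Ks m)) ->
  dense oX (fun x => exists m, kernel (Ks m) x) ->
  has_countable_dense_subfamily (prod_open oX oY) UU.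
Proof.
  intros HW0 HKs Hd.
  set (L := fun i => let (m, j) := of_nat i in members (T (Ks m) (ys (Ks m) j))).
  destruct (enumerate_lists _ UU W0 L HW0) as [f [Hf Henum]].
  { intros i W. unfold L. destruct (of_nat i) as [m j].
    apply (T_tube (Ks m) (ys (Ks m) j) (HKs m)). }
  exists f. split; [exact Hf |].
  intros O HO [p Op].
  destruct (HO p Op) as [A [B [HA [HB [Ap [Bp HAB]]]]]].
  destruct (Hd A HA (ex_intro _ _ Ap)) as [x [Ax [m Gx]]].
  destruct (ys_dense (Ks m) (HKs m) B HB (ex_intro _ _ Bp)) as [y [By [j Vy]]].
  destruct (T_tube (Ks m) (ys (Ks m) j) (HKs m)) as [_ [_ [_ [_ [_ Hcover]]]]].
  destruct (Hcover x y (Gx j) Vy) as [W [HWl Wxy]].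
  destruct (Henum (to_nat (m, j)) W) as [n Hn].
  { unfold L. rewrite cancel_of_to. exact HWl. }
  exists (x, y). split; [apply HAB; assumption |].
  exists n. rewrite Hn. exact Wxy.
Qed.

End Tubes.

Theorem lemma5p9 (X Y : Type) (oX : set X -> Prop) (oY : set Y -> Prop)
  (tX : is_topology oX) (tY : is_topology oY)
  (t1X : T1_space oX) (t1Y : T1_space oY)
  (infX : infinite_type X) (infY : infinite_type Y) :
  weakly_Alster oX -> weakly_Lindelof oY -> weakly_Lindelof (prod_open oX oY).
Proof.
  intros HA HL UU UU_open UU_cover.
  destruct (infinite_inhabited X infX) as [x0].
  destruct (infinite_inhabited Y infY) as [y0].
  destruct (UU_cover (x0, y0)) as [W0 [HW0 _]].
  destruct (tube_choice X Y oX oY UU tX tY UU_open UU_cover) as [T HT].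
  destruct (fiber_selection X Y oX oY UU T HT HL (inhabits y0)) as [ys Hys].
  destruct (kernel_sequence X Y oX oY UU T HT ys HA) as [Ks [HKs Hd]].
  exact (dense_subfamily_from_kernels X Y oX oY UU T HT ys Hys Ks W0 HW0 HKs Hd).
Qed.
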